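(* Let $V$ be a poset, $m$ a maximal node of positive height, and let $U$ be a splitting of $V$ at $m$ with splitting map $\varphi$ and associated set $\mathcal M=\varphi^{-1}(m)$. Then $d_{L_U(n)}(n)=d_{L_V(\varphi(n))}(\varphi(n))$ for every node $n\in U\setminus\mathcal M$ of positive height.
   Context: For a poset $W$: $L_W(u)=\{v\le u\}$, $G(u)=\{v\ge u\}$; height of $u$ is the supremum of lengths of chains in $L(u)$; $H_1$ = height-one nodes; $\mathcal H_W$ = minimal nodes together with height-one nodes dominating at least two minimal nodes. For a poset $W$ with single maximal node $n$ and dimension $\ge1$: $\mathcal H_W^*=\mathcal H_W\setminus\{n\}$; $\Lambda_W$ = $(H_1\cap\mathcal H_W^* )$ together with all $v\in\mathcal H_W^*$ with $G(v)\cap H_1\cap\mathcal H_W^*=\emptyset$; $d_W(n)=|\Lambda_W|$. Splitting: $U$ is a splitting of $V$ at $m$ via $\varphi:U\to V$ if $\varphi$ is surjective order-preserving, there is a finite nonempty $\mathcal M\subseteq\max U$ of positive-height nodes with $\varphi^{-1}(m)=\mathcal M$, $|\varphi^{-1}(v)|=1$ for $v\ne m$, and whenever $\varphi(x')=x\le y$ there is $y'\ge x'$ with $\varphi(y')=y$. *)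

From HB Require Import structures.
From mathcomp Require Import all_boot all_order.
From mathcomp Require Import boolp classical_sets cardinality.
Set Implicit Arguments. Unset Strict Implicit. Unset Printing Implicit Defensive.
Import Order.TTheory.
Local Open Scope classical_set_scope.
Local Open Scope order_scope.

Section PosetDefs.
Context {disp : Order.disp_t} {T : porderType disp}.

(* A (sub)poset is given by a carrier W : set T with the induced order. *)
Definition Ldown (W : set T) (u : T) : set T := [set v | W v /\ v <= u].
Definition Gup (W : set T) (u : T) : set T := [set v | W v /\ u <= v].

Definition chain_in_L (W : set T) (u : T) (k : nat) : Prop :=
  exists s : nat -> T,
    (forall i, (i <= k)%N -> Ldown W u (s i)) /\
    (forall i, (i < k)%N -> s i < s i.+1).

(* height of u (sup of chain lengths in L_W(u)) is >= k *)
Definition height_ge (W : set T) (u : T) (k : nat) : Prop := chain_in_L W u k.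
Definition pos_height (W : set T) (u : T) : Prop := W u /\ height_ge W u 1.
Definition height_one (W : set T) (u : T) : Prop :=
  W u /\ height_ge W u 1 /\ ~ height_ge W u 2.

Definition minimal_node (W : set T) (u : T) : Prop :=
  W u /\ forall v, W v -> v <= u -> v = u.
Definition maximal_node (W : set T) (u : T) : Prop :=
  W u /\ forall v, W v -> u <= v -> v = u.

Definition H1 (W : set T) : set T := [set u | height_one W u].
Definition HH (W : set T) : set T :=
  [set u | minimal_node W u] `|`
  [set u | height_one W u /\ exists a b, a <> b /\ minimal_node W a /\
             minimal_node W b /\ a <= u /\ b <= u].
(* \mathcal H_W^* for W with single maximal node n *)
Definition HHstar (W : set T) (n : T) : set T := HH W `\` [set n].
(* \Lambda_W ; d_W(n) = |Lambda W n| *)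
Definition Lambda (W : set T) (n : T) : set T :=
  (H1 W `&` HHstar W n) `|`
  [set v | HHstar W n v /\ (Gup W v `&` H1 W `&` HHstar W n) = set0].

End PosetDefs.

(* U (whole type) is a splitting of V (whole type) at m via phi, with
   associated set M = phi^-1(m). *)
Definition splitting {d1 d2 : Order.disp_t} {U : porderType d1}
    {V : porderType d2} (phi : U -> V) (m : V) (M : set U) : Prop :=
  (forall v : V, exists u : U, phi u = v) /\
  (forall x y : U, x <= y -> phi x <= phi y) /\
  [/\ 
      [/\ finite_set M, M !=set0,
          (forall x, M x -> maximal_node setT x) &
          (forall x, M x -> pos_height setT x)],
      (forall x : U, phi x = m <-> M x),
      (forall v : V, v <> m -> exists! u : U, phi u = v) &
      (forall (x' : U) (y : V), phi x' <= y ->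
         exists y' : U, x' <= y' /\ phi y' = y)].

From mathcomp Require Import all_boot all_order.
From mathcomp Require Import boolp classical_sets cardinality.
Set Implicit Arguments. Unset Strict Implicit. Unset Printing Implicit Defensive.
Import Order.TTheory.
Local Open Scope classical_set_scope.
Local Open Scope order_scope.

(* Every notion entering d_W(n) is defined from the order of W alone, so an
   order isomorphism f : W -> W' maps Lambda_W(n) onto Lambda_W'(f n).  Below a
   node n outside M the splitting map is such an isomorphism
   L_U(n) -> L_V(phi n).  It is injective there because phi is one-to-one off
   M and no x <= n lies in M (elements of M are maximal).  It is onto and
   reflects the order because a preimage u of w <= phi n lifts to some y >= u
   with phi y = phi n, and injectivity forces y = n. *)

Record order_iso_on {d d' : Order.disp_t} {T : porderType d} {T' : porderType d'}
    (W : set T) (W' : set T') (f : T -> T') (g : T' -> T) : Prop := OrderIsoOn {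
  iso_fW : forall x, W x -> W' (f x);
  iso_gW : forall y, W' y -> W (g y);
  iso_fK : forall x, W x -> g (f x) = x;
  iso_gK : forall y, W' y -> f (g y) = y;
  iso_f_homo : forall x y, W x -> W y -> x <= y -> f x <= f y;
  iso_g_homo : forall x y, W' x -> W' y -> x <= y -> g x <= g y }.

Lemma order_iso_on_sym {d d' : Order.disp_t} {T : porderType d} {T' : porderType d'}
    (W : set T) (W' : set T') f g :
  order_iso_on W W' f g -> order_iso_on W' W g f.
Proof. by case=> *; constructor. Qed.

Section PosetFacts.
Context {d : Order.disp_t} {T : porderType d}.
Implicit Types (W : set T) (n u : T).

Lemma HH_sub W u : HH W u -> W u.
Proof. by case=> [[]|[[]]]. Qed.

Lemma Lambda_sub W n u : Lambda W n u -> W u.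
Proof. by case=> [[_ [hh _]]|[[hh _] _]]; exact: HH_sub hh. Qed.

End PosetFacts.

Section IsoOrder.
Context {d d' : Order.disp_t} {T : porderType d} {T' : porderType d'}.
Variables (W : set T) (W' : set T') (f : T -> T') (g : T' -> T).
Hypothesis fg : order_iso_on W W' f g.

Lemma iso_inj x y : W x -> W y -> f x = f y -> x = y.
Proof. by move=> Wx Wy e; rewrite -(iso_fK fg Wx) e (iso_fK fg Wy). Qed.

Lemma iso_lt x y : W x -> W y -> x < y -> f x < f y.
Proof.
move=> Wx Wy; rewrite !lt_def => /andP[yx xy]; apply/andP; split.
  by apply: contra_neq yx => /(iso_inj Wy Wx).
exact: (iso_f_homo fg).
Qed.

Lemma chain_in_L_iso_map u k : W u -> chain_in_L W u k -> chain_in_L W' (f u) k.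
Proof.
move=> Wu [s [s_below s_lt]]; exists (f \o s); split.
  by move=> i /s_below[Wsi siu]; split; [exact: (iso_fW fg) | exact: (iso_f_homo fg)].
move=> i ik; have [Wsi _] := s_below i (ltnW ik); have [Wsi1 _] := s_below i.+1 ik.
by apply: iso_lt => //; exact: s_lt.
Qed.

Lemma minimal_node_iso_map u : minimal_node W u -> minimal_node W' (f u).
Proof.
move=> [Wu u_min]; split; first exact: (iso_fW fg).
move=> v W'v vu; have := iso_g_homo fg W'v (iso_fW fg Wu) vu.
by rewrite (iso_fK fg Wu) => /(u_min _ (iso_gW fg W'v)) <-; rewrite (iso_gK fg).
Qed.

Lemma Gup_iso_map u v : W u -> Gup W u v -> Gup W' (f u) (f v).
Proof. by move=> Wu [Wv uv]; split; [exact: (iso_fW fg) | exact: (iso_f_homo fg)]. Qed.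

End IsoOrder.

Section IsoHeight.
Context {d d' : Order.disp_t} {T : porderType d} {T' : porderType d'}.
Variables (W : set T) (W' : set T') (f : T -> T') (g : T' -> T).
Hypothesis fg : order_iso_on W W' f g.

Lemma chain_in_L_iso u k : W u -> chain_in_L W' (f u) k <-> chain_in_L W u k.
Proof.
move=> Wu; split=> [|/(chain_in_L_iso_map fg Wu)//].
by move/(chain_in_L_iso_map (order_iso_on_sym fg) (iso_fW fg Wu)); rewrite (iso_fK fg).
Qed.

Lemma height_one_iso_map u : height_one W u -> height_one W' (f u).
Proof.
move=> [Wu [h1 not_h2]]; split; first exact: (iso_fW fg).
by rewrite /height_ge !chain_in_L_iso.
Qed.

Lemma HH_iso_map u : HH W u -> HH W' (f u).
Proof.
case=> [u_min|[u_h1 [a [b [ab [a_min [b_min [au bu]]]]]]]].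
  by left; exact: (minimal_node_iso_map fg u_min).
have Wu := u_h1.1; right; split; first exact: height_one_iso_map.
exists (f a), (f b); split; first by apply: contra_not ab; exact: (iso_inj fg a_min.1 b_min.1).
do 2![split; first exact: (minimal_node_iso_map fg)].
by split; apply: (iso_f_homo fg) => //; [exact: a_min.1 | exact: b_min.1].
Qed.

Lemma HHstar_iso_map n u : W n -> HHstar W n u -> HHstar W' (f n) (f u).
Proof.
move=> Wn [hh un]; split; first exact: HH_iso_map.
by apply: contra_not un => /(iso_inj fg (HH_sub hh) Wn).
Qed.

End IsoHeight.

Section IsoLambda.
Context {d d' : Order.disp_t} {T : porderType d} {T' : porderType d'}.
Variables (W : set T) (W' : set T') (f : T -> T') (g : T' -> T).
Hypothesis fg : order_iso_on W W' f g.

Lemma Lambda_iso_map n u : W n -> Lambda W n u -> Lambda W' (f n) (f u).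
Proof.
have gf := order_iso_on_sym fg.
move=> Wn [[u_h1 u_hs]|[u_hs no_above]].
  by left; split; [exact: (height_one_iso_map fg) | exact: (HHstar_iso_map fg)].
right; split; first exact: (HHstar_iso_map fg).
have Wu := HH_sub u_hs.1.
apply/seteqP; split=> // v [[uv v_h1] v_hs].
have : (Gup W u `&` H1 W `&` HHstar W n) (g v).
  have := Gup_iso_map gf (iso_fW fg Wu) uv.
  have := height_one_iso_map gf v_h1.
  have := HHstar_iso_map gf (iso_fW fg Wn) v_hs.
  by rewrite !(iso_fK fg).
by rewrite no_above.
Qed.

End IsoLambda.

Section IsoCard.
Context {d d' : Order.disp_t} {T : porderType d} {T' : porderType d'}.
Variables (W : set T) (W' : set T') (f : T -> T') (g : T' -> T).
Hypothesis fg : order_iso_on W W' f g.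

Lemma Lambda_iso n : W n -> Lambda W' (f n) = f @` Lambda W n.
Proof.
move=> Wn; apply/seteqP; split=> [v v_lam|_ [u u_lam <-]]; last exact: (Lambda_iso_map fg).
have W'v := Lambda_sub v_lam.
exists (g v); last exact: (iso_gK fg).
by have := Lambda_iso_map (order_iso_on_sym fg) (iso_fW fg Wn) v_lam; rewrite (iso_fK fg).
Qed.

Lemma card_eq_Lambda_iso n : W n -> card_eq (Lambda W n) (Lambda W' (f n)).
Proof.
move=> Wn; rewrite (Lambda_iso Wn) card_eq_sym; apply: inj_card_eq.
by move=> x y /set_mem/Lambda_sub Wx /set_mem/Lambda_sub Wy; exact: (iso_inj fg).
Qed.

End IsoCard.

Section Splitting.
Context {d1 d2 : Order.disp_t} {U : porderType d1} {V : porderType d2}.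
Variables (phi : U -> V) (m : V) (M : set U).
Hypothesis phi_split : splitting phi m M.

Lemma splitting_homo x y : x <= y -> phi x <= phi y.
Proof. by case: phi_split => _ [homo _]; exact: homo. Qed.

Lemma splitting_fiber x : phi x = m <-> M x.
Proof. by case: phi_split => _ [_ [_ fiber _ _]]; exact: fiber. Qed.

Lemma splitting_inj x y : phi y <> m -> phi x = phi y -> x = y.
Proof.
case: phi_split => _ [_ [_ _ uniq_preim _]] ym xy.
by have [u [_ u_uniq]] := uniq_preim _ ym; rewrite -(u_uniq x xy) (u_uniq y).
Qed.

Lemma splitting_lift x w : phi x <= w -> exists y, x <= y /\ phi y = w.
Proof. by case: phi_split => _ [_ [_ _ _ lift]]; exact: lift. Qed.

Lemma splitting_below_notin n x : ~ M n -> x <= n -> phi x <> m.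
Proof.
case: phi_split => _ [_ [[_ _ M_max _] _ _ _]] Mn xn /splitting_fiber Mx.
by apply: Mn; rewrite ((M_max x Mx).2 n I xn).
Qed.

Lemma splitting_lift_below n w : ~ M n -> w <= phi n -> exists u, u <= n /\ phi u = w.
Proof.
move=> Mn w_le; have [/(_ w)[u phiu] _] := phi_split; subst w.
have [y [uy phiy]] := splitting_lift w_le.
by exists u; rewrite -(splitting_inj (splitting_below_notin Mn (lexx n)) phiy).
Qed.

Lemma splitting_Ldown_iso n : ~ M n ->
  exists g, order_iso_on (Ldown setT n) (Ldown setT (phi n)) phi g.
Proof.
move=> Mn; set W := Ldown setT n; set W' := Ldown setT (phi n).
have /choice[g gP] : forall w, exists u, W' w -> W u /\ phi u = w.
  move=> w.
  have [[_ w_le]|nW'w] := pselect (W' w); last by exists n => /nW'w.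
  by have [u [un <-]] := splitting_lift_below Mn w_le; exists u.
have phiW' x : W x -> W' (phi x) by move=> [_ xn]; split=> //; exact: splitting_homo.
have phiK x : W x -> g (phi x) = x.
  by move=> Wx; have [_] := gP _ (phiW' x Wx); apply/splitting_inj/(splitting_below_notin Mn Wx.2).
exists g; constructor=> //.
- by move=> w /gP[].
- by move=> w /gP[].
- by move=> x y _ _; exact: splitting_homo.
move=> v w W'v W'w vw; have [_ gv] := gP _ W'v; have [Wgw gw] := gP _ W'w.
rewrite -gv -gw in vw; have [y [gvy phiy]] := splitting_lift vw.
by rewrite -(splitting_inj (splitting_below_notin Mn Wgw.2) phiy).
Qed.

End Splitting.

Theorem lemma5p5 (d1 d2 : Order.disp_t) (U : porderType d1) (V : porderType d2)
    (m : V) (phi : U -> V) (M : set U) :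
  maximal_node setT m -> pos_height setT m ->
  splitting phi m M ->
  forall n : U, ~ M n -> pos_height setT n ->
  card_eq (Lambda (Ldown setT n) n) (Lambda (Ldown setT (phi n)) (phi n)).
Proof.
move=> _ _ phi_split n Mn _.
have [g phi_iso] := splitting_Ldown_iso phi_split Mn.
by apply: (card_eq_Lambda_iso phi_iso); split.
Qed.
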